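(* Let $R$ be a ring with unity and involution $*$, let $a,b,c,d\in R$ with $a$ and $d$ both left dual $(b,c)$-core invertible. Then (1) for any left dual $(b,c)$-core inverse $y$ of $d$ and any left $(b,c)$-inverse $x$ of $a$, the element $ydx$ is a left dual $(b,c)$-core inverse of $a$; (2) for any left dual $(b,c)$-core inverse $z$ of $a$ and any left $(b,c)$-inverse $w$ of $d$, the element $zaw$ is a left dual $(b,c)$-core inverse of $d$.
   Context: For $u,b,c\in R$, $u$ is left dual $(b,c)$-core invertible if there exists $x\in Rc$ with $bxub=b$ and $(xub)^*=xub$; such $x$ is a left dual $(b,c)$-core inverse of $u$. $u$ is left $(b,c)$-invertible if there exists $x\in Rc$ with $xub=b$; such $x$ is a left $(b,c)$-inverse of $u$ (left dual $(b,c)$-core invertible elements are in particular left $(b,c)$-invertible). *)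

From mathcomp Require Import all_boot all_order all_algebra.
Set Implicit Arguments. Unset Strict Implicit. Unset Printing Implicit Defensive.
Import GRing.Theory.
Local Open Scope ring_scope.

Definition involution (R : pzRingType) (s : R -> R) : Prop :=
  [/\ forall x y : R, s (x + y) = s x + s y,
      forall x y : R, s (x * y) = s y * s x
    & forall x : R, s (s x) = x].

Definition in_left_ideal (R : pzRingType) (c x : R) : Prop := exists r : R, x = r * c.

Definition is_left_dual_bc_core_inverse (R : pzRingType) (s : R -> R) (b c u x : R) : Prop :=
  [/\ in_left_ideal c x, b * x * u * b = b & s (x * u * b) = x * u * b].

Definition left_dual_bc_core_invertible (R : pzRingType) (s : R -> R) (b c u : R) : Prop :=
  exists x : R, is_left_dual_bc_core_inverse s b c u x.

Definition is_left_bc_inverse (R : pzRingType) (b c u x : R) : Prop :=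
  in_left_ideal c x /\ x * u * b = b.

From mathcomp Require Import all_boot all_order all_algebra.
Import GRing.Theory.
Local Open Scope ring_scope.

(* If [x a b = b], then [(v x) a b = v b] for every [v]; with [v := y d] this
   turns each defining identity of [y] as a left dual (b,c)-core inverse of [d]
   into the corresponding identity for [y d x] and [a]. *)

Lemma in_left_idealMl (R : pzRingType) (c r x : R) :
  in_left_ideal c x -> in_left_ideal c (r * x).
Proof. by move=> [t ->]; exists (r * t); rewrite mulrA. Qed.

Lemma left_bc_inverseMl {R : pzRingType} {b c u x : R} (v : R) :
  is_left_bc_inverse b c u x -> v * x * u * b = v * b.
Proof. by move=> [_ xub]; rewrite -[in RHS]xub !mulrA. Qed.

Lemma left_dual_bc_core_inverse_transfer (R : pzRingType) (s : R -> R)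
    (b c u v x y : R) :
  is_left_dual_bc_core_inverse s b c v y -> is_left_bc_inverse b c u x ->
  is_left_dual_bc_core_inverse s b c u (y * v * x).
Proof.
move=> [_ byvb sym] xinv.
split; first exact: in_left_idealMl xinv.1.
- by rewrite !mulrA (left_bc_inverseMl (b * y * v) xinv).
- by rewrite (left_bc_inverseMl (y * v) xinv).
Qed.

Theorem theorem3p18 (R : pzRingType) (s : R -> R) (a b c d : R) :
  involution s ->
  left_dual_bc_core_invertible s b c a ->
  left_dual_bc_core_invertible s b c d ->
  (forall y x : R, is_left_dual_bc_core_inverse s b c d y ->
                   is_left_bc_inverse b c a x ->
                   is_left_dual_bc_core_inverse s b c a (y * d * x)) /\
  (forall z w : R, is_left_dual_bc_core_inverse s b c a z ->
                   is_left_bc_inverse b c d w ->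
                   is_left_dual_bc_core_inverse s b c d (z * a * w)).
Proof.
by move=> _ _ _; split=> ? ?; apply: left_dual_bc_core_inverse_transfer.
Qed.
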